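(* Let $\tau:\mathbb{F}_p((t))^d\to\mathbb{F}_p((t))^d$, $(f_1,\dots,f_d)\mapsto(tf_1,\dots,tf_d)$, and let $\phi:\mathbb{F}_p((t))\to\mathrm{Aut}(\mathbb{F}_p((t))^d)$ be a continuous homomorphism satisfying $\phi(tf)=\tau\circ\phi(f)\circ\tau^{-1}$ for all $f$. Assume that $\phi(f)(\mathbb{F}_p[[t]]^d)=\mathbb{F}_p[[t]]^d$ for every $f\in\mathbb{F}_p[[t]]$. Then there are sequences of integers $(a_m)_{m\in\mathbb{N}}$ with $a_0=0$ (which may be taken non-increasing) and $(b_i)_{i\in\mathbb{N}}$ (which may be taken non-decreasing) such that for all $f\in\mathbb{F}_p[[t]]$, $$\pi_i\circ(\phi(f)-\mathrm{Id})|_{\mathbb{V}_j}=0\quad\text{for all } i,j\in\mathbb{Z} \text{ with } \begin{cases} j>i-m, & \text{if } i<a_m \ (\text{for some } m\in\mathbb{N}),\\ j>i+b_i, & \text{if } i\ge 0.\end{cases}$$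
   Context: $\mathbb{N}$ includes $0$. $\mathrm{Aut}(\mathbb{F}_p((t))^d)$ is the group of automorphisms of the topological group $(\mathbb{F}_p((t))^d,+)$ with the Braconnier topology (basis of identity neighbourhoods $\{\alpha:\alpha(x)-x\in U,\ \alpha^{-1}(x)-x\in U\ \forall x\in K\}$, $K$ compact, $U$ an identity neighbourhood). For $n\in\mathbb{Z}$, $\mathbb{V}_n=\{(a_1t^n,\dots,a_dt^n):a_r\in\mathbb{F}_p\}$ and $\pi_n:\mathbb{F}_p((t))^d\to\mathbb{V}_n$ is the projection taking $t^n$-coefficients of each coordinate. *)

From mathcomp Require Import all_boot all_order all_algebra.
Set Implicit Arguments. Unset Strict Implicit. Unset Printing Implicit Defensive.
Import Order.TTheory GRing.Theory Num.Theory.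
Local Open Scope ring_scope.

(* Laurent series over F_p: coefficient functions int -> 'F_p whose support
   is bounded below.  lcoef f n = coefficient of t^n. *)
Definition laurent_pred (p : nat) (f : int -> 'F_p) : Prop :=
  exists N : int, forall n : int, n < N -> f n = 0.

Definition laurent (p : nat) := {f : int -> 'F_p | laurent_pred f}.

Definition lcoef (p : nat) (f : laurent p) : int -> 'F_p := proj1_sig f.

Lemma laurent_pred_add (p : nat) (f g : laurent p) :
  laurent_pred (fun n => lcoef f n + lcoef g n).
Proof.
case: f => f [N hN]; case: g => g [M hM]; exists (Num.min N M) => n hn /=.
move: hn; rewrite lt_min => /andP[h1 h2]; by rewrite hN ?hM ?addr0.
Qed.

Lemma laurent_pred_opp (p : nat) (f : laurent p) :
  laurent_pred (fun n => - lcoef f n).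
Proof. case: f => f [N hN]; exists N => n hn /=; by rewrite hN ?oppr0. Qed.

Lemma laurent_pred_shift (p : nat) (f : laurent p) (k : int) :
  laurent_pred (fun n => lcoef f (n - k)).
Proof.
case: f => f [N hN]; exists (N + k) => n hn /=; apply: hN.
by rewrite ltrBlDr.
Qed.

Definition ladd (p : nat) (f g : laurent p) : laurent p :=
  exist _ _ (laurent_pred_add f g).
Definition lopp (p : nat) (f : laurent p) : laurent p :=
  exist _ _ (laurent_pred_opp f).
Definition lsub (p : nat) (f g : laurent p) : laurent p := ladd f (lopp g).

(* multiplication by t^k :  coefficient of t^n in t^k f is that of t^(n-k) in f *)
Definition lshiftk (p : nat) (k : int) (f : laurent p) : laurent p :=
  exist _ _ (laurent_pred_shift f k).
Definition lmulX (p : nat) (f : laurent p) : laurent p := lshiftk 1 f.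

Definition lpower (p : nat) (f : laurent p) : Prop :=
  forall n : int, n < 0 -> lcoef f n = 0.

Definition vec (p d : nat) := 'I_d -> laurent p.

Definition vadd (p d : nat) (x y : vec p d) : vec p d := fun r => ladd (x r) (y r).
Definition vsub (p d : nat) (x y : vec p d) : vec p d := fun r => lsub (x r) (y r).

Definition tau {p d : nat} (x : vec p d) : vec p d := fun r => lshiftk 1 (x r).
Definition tauinv {p d : nat} (x : vec p d) : vec p d := fun r => lshiftk (-1) (x r).

Definition vpower (p d : nat) (x : vec p d) : Prop := forall r, lpower (x r).

(* t-adic topology on F_p((t))^d : x and y agree below t^n *)
Definition vagree (p d : nat) (n : int) (x y : vec p d) : Prop :=
  forall r (k : int), k < n -> lcoef (x r) k = lcoef (y r) k.

Definition vopen (p d : nat) (O : vec p d -> Prop) : Prop :=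
  forall x, O x -> exists n : int, forall y, vagree n x y -> O y.

Definition vcompact (p d : nat) (K : vec p d -> Prop) : Prop :=
  forall (I : Type) (O : I -> vec p d -> Prop),
    (forall i, vopen (O i)) -> (forall x, K x -> exists i, O i x) ->
    exists (n : nat) (g : 'I_n -> I), forall x, K x -> exists j, O (g j) x.

Definition vnbhd0 (p d : nat) (U : vec p d -> Prop) : Prop :=
  exists n : int, forall y, (forall r (k : int), k < n -> lcoef (y r) k = 0) -> U y.

Definition vcont (p d : nat) (a : vec p d -> vec p d) : Prop :=
  forall x (n : int), exists m : int, forall y, vagree m x y -> vagree n (a x) (a y).

Definition isAut (p d : nat) (a : vec p d -> vec p d) : Prop :=
  (forall x y, a (vadd x y) = vadd (a x) (a y)) /\
  exists b, cancel a b /\ cancel b a /\ vcont a /\ vcont b.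

(* basic Braconnier identity neighbourhood N(K,U) *)
Definition braconnier_nbhd (p d : nat) (K U : vec p d -> Prop)
    (g : vec p d -> vec p d) : Prop :=
  isAut g /\ exists gi, cancel g gi /\ cancel gi g /\
    forall x, K x -> U (vsub (g x) x) /\ U (vsub (gi x) x).

(* continuity of phi : F_p((t)) -> Aut(F_p((t))^d) (Braconnier topology):
   for every f0 and every basic neighbourhood N(K,U) . phi f0 of phi f0 there
   is a t-adic ball around f0 mapped into it. *)
Definition phi_continuous (p d : nat) (phi : laurent p -> vec p d -> vec p d) : Prop :=
  forall (f0 : laurent p) (K U : vec p d -> Prop), vcompact K -> vnbhd0 U ->
    exists m : int, forall f : laurent p,
      (forall n : int, n < m -> lcoef f n = lcoef f0 n) ->
      exists g, braconnier_nbhd K U g /\ phi f = g \o phi f0.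

Definition inV (p d : nat) (j : int) (v : vec p d) : Prop :=
  forall r (n : int), n != j -> lcoef (v r) n = 0.

Definition killed (p d : nat) (a : vec p d -> vec p d) (i j : int) : Prop :=
  forall v, inV j v -> forall r, lcoef (vsub (a v) v r) i = 0.

From mathcomp Require Import all_boot all_order all_algebra.
From mathcomp Require Import zify.
From Stdlib Require Import FunctionalExtensionality ProofIrrelevance ClassicalEpsilon.
Set Implicit Arguments. Unset Strict Implicit. Unset Printing Implicit Defensive.
Import Order.TTheory GRing.Theory Num.Theory.
Local Open Scope ring_scope.

(* Write O = F_p[[t]] and let phi be as in the theorem.
   Two uniform estimates on the family {phi f | f in O} give the sequences.
   (a) Below the diagonal.  Conjugating by tau^n (phi (t^n f) = tau^n phi f
       tau^-n) moves V_j to V_(j+n); since phi f preserves O^d, the block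
       pi_i (phi f - Id)|V_j vanishes when i < 0 and i < j.  For the
       remaining blocks with i < A and j > i - m, conjugation reduces to
       phi (t^n f) acting on the finitely many constant vectors with n large,
       and continuity of phi at 0 (Braconnier topology, singleton compacta)
       makes phi (t^n f) the identity on constants modulo t^m.
   (b) Above the diagonal.  Writing f = t f' + c with c in F_p, induction on
       n shows that for each n some J has phi f (t^J O^d) in t^n O^d for all
       f in O: each of the finitely many automorphisms phi c is continuous.
   Each estimate gives, for every index, a bound that can be weakened
   monotonically; a running minimum (resp. maximum) of chosen bounds then
   yields the non-increasing sequence a (with a 0 = 0) and the non-decreasing
   sequence b. *)

Lemma laurent_eq p (f g : laurent p) : (forall n, lcoef f n = lcoef g n) -> f = g.
Proof.
case: f => f hf; case: g => g hg /= H.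
have E : f = g by apply: functional_extensionality.
subst g; congr exist; apply: proof_irrelevance.
Qed.

Lemma vec_eq p d (x y : vec p d) :
  (forall r n, lcoef (x r) n = lcoef (y r) n) -> x = y.
Proof. move=> H; apply: functional_extensionality => r; apply: laurent_eq; exact: H. Qed.

Lemma vsub_coef p d (x y : vec p d) r k :
  lcoef (vsub x y r) k = lcoef (x r) k - lcoef (y r) k.
Proof. by []. Qed.

(* f lies in t^n F_p[[t]]; for n = 0 this is (convertibly) lpower f. *)
Definition lvanish_below p (n : int) (f : laurent p) : Prop :=
  forall k : int, k < n -> lcoef f k = 0.

(* x lies in t^n F_p[[t]]^d; for n = 0 this is (convertibly) vpower x. *)
Definition vanish_below p d (n : int) (x : vec p d) : Prop :=
  forall r, lvanish_below n (x r).

Lemma vanish_below_le p d (m n : int) (x : vec p d) :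
  m <= n -> vanish_below n x -> vanish_below m x.
Proof. by move=> hmn hx r k hk; apply: hx; lia. Qed.

Lemma inV_vanish_below p d (j n : int) (v : vec p d) :
  inV j v -> n <= j -> vanish_below n v.
Proof. by move=> hv hnj r k hk; apply: hv; lia. Qed.

Lemma killedP p d (a : vec p d -> vec p d) (i j : int) :
  (forall v, inV j v -> forall r, lcoef (a v r) i = lcoef (v r) i) -> killed a i j.
Proof. by move=> H v hv r; rewrite vsub_coef H // subrr. Qed.

Lemma lconst_pred p (c : 'F_p) : laurent_pred (fun n : int => if n == 0 then c else 0).
Proof. exists 0 => n hn /=; rewrite ifF //; lia. Qed.

Definition lconst p (c : 'F_p) : laurent p := exist _ _ (lconst_pred c).

Definition vconst p d (c : 'I_d -> 'F_p) : vec p d := fun r => lconst (c r).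

Definition vzero {p d} : vec p d := vconst (fun _ => 0).

Lemma inV0_vconst p d (w : vec p d) : inV 0 w -> w = vconst (fun r => lcoef (w r) 0).
Proof. by move=> hw; apply: vec_eq => r n /=; case: eqP => [->|/eqP hn] //; apply: hw. Qed.

Lemma vagree_vzero p d (n : int) (y : vec p d) : vagree n vzero y <-> vanish_below n y.
Proof.
rewrite /vagree /vanish_below /lvanish_below /=.
by split=> H r k hk; have := H r k hk; case: (k == 0) => ->.
Qed.

Lemma ltail_pred p (f : laurent p) :
  laurent_pred (fun n : int => if n < 0 then 0 else lcoef f (n + 1)).
Proof. exists 0 => n hn /=; by rewrite hn. Qed.

Definition ltail p (f : laurent p) : laurent p := exist _ _ (ltail_pred f).

Lemma lpower_tail p (f : laurent p) : lpower (ltail f).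
Proof. by move=> k hk /=; rewrite hk. Qed.

Lemma lpower_decomp p (f : laurent p) :
  lpower f -> f = ladd (lmulX (ltail f)) (lconst (lcoef f 0)).
Proof.
move=> hf; apply: laurent_eq => n /=.
case: (ltrgtP n 0) => hn.
- by rewrite ifT ?hf ?addr0 //; lia.
- by rewrite ifF ?addr0 ?subrK //; lia.
- by subst n; rewrite add0r.
Qed.

Definition shiftv p d (s : int) (x : vec p d) : vec p d := fun r => lshiftk s (x r).

Lemma lshiftk_add p (s s' : int) (f : laurent p) :
  lshiftk s (lshiftk s' f) = lshiftk (s + s') f.
Proof. by apply: laurent_eq => k /=; congr (lcoef _ _); lia. Qed.

Lemma shiftv_add p d (s s' : int) (x : vec p d) :
  shiftv s (shiftv s' x) = shiftv (s + s') x.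
Proof. by apply: functional_extensionality => r; apply: lshiftk_add. Qed.

Lemma shiftv0 p d (x : vec p d) : shiftv 0 x = x.
Proof. by apply: vec_eq => r k /=; rewrite subr0. Qed.

Lemma lvanish_below_shift p (n s : int) (f : laurent p) :
  lvanish_below n f -> lvanish_below (n + s) (lshiftk s f).
Proof. by move=> hf k hk /=; apply: hf; lia. Qed.

Lemma vanish_below_shift p d (n s : int) (x : vec p d) :
  vanish_below n x -> vanish_below (n + s) (shiftv s x).
Proof. by move=> hx r; apply: lvanish_below_shift. Qed.

Lemma inV_shift p d (j s : int) (v : vec p d) : inV j v -> inV (j + s) (shiftv s v).
Proof. by move=> hv r k hk /=; apply: hv; lia. Qed.

Lemma additive_vzero p d (a : vec p d -> vec p d) :
  (forall x y, a (vadd x y) = vadd (a x) (a y)) -> a vzero = vzero.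
Proof.
move=> hadd.
have zz : vadd vzero vzero = vzero :> vec p d.
  by apply: vec_eq => r n /=; case: (n == 0); rewrite addr0.
apply: vec_eq => r k.
have := congr1 (fun x => lcoef (x r) k) (hadd vzero vzero); rewrite zz /=.
rewrite -{1}(addr0 (lcoef (a vzero r) k)) => /addrI <-.
by case: (k == 0).
Qed.

Lemma aut_continuous_at0 p d (a : vec p d -> vec p d) : isAut a ->
  forall n : int, exists m : int, forall y, vanish_below m y -> vanish_below n (a y).
Proof.
move=> [hadd [_ [_ [_ [ha _]]]]] n.
have [m Hm] := ha vzero n.
exists m => y /vagree_vzero hy; apply/vagree_vzero.
by rewrite -(additive_vzero hadd); apply: Hm.
Qed.

Lemma finite_uniform_bound (T : finType) (P : T -> int -> Prop) :
  (forall c m m', m <= m' -> P c m -> P c m') ->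
  (forall c, exists m, P c m) -> exists m, forall c, P c m.
Proof.
move=> mon H.
suff [m Hm] : exists m, forall c, c \in enum T -> P c m.
  by exists m => c; apply: Hm; rewrite mem_enum.
elim: (enum T) => [|c s [m Hm]]; first by exists 0.
have [mc Hc] := H c.
exists (Num.max mc m) => c'; rewrite inE => /orP[/eqP ->|cs].
  by apply: (mon _ mc) => //; lia.
by apply: (mon _ m); [lia | exact: Hm].
Qed.

(* Choosing one bound per index, a running minimum turns bounds that can be
   lowered into a non-increasing sequence with prescribed first term. *)
Lemma nonincreasing_choice (P : nat -> int -> Prop) (a0 : int) :
  P 0%N a0 -> (forall m, exists A, P m A) ->
  (forall m A A', A' <= A -> P m A -> P m A') ->
  exists a : nat -> int, a 0%N = a0 /\ (forall m, a m.+1 <= a m) /\ forall m, P m (a m).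
Proof.
move=> P0 ex down; have [A HA] := choice _ ex.
pose a := fix a (m : nat) : int := if m is m'.+1 then Num.min (a m') (A m) else a0.
exists a; split=> //; split=> [m /=|[|m] //]; first lia.
by apply: (down _ (A m.+1)) => //=; lia.
Qed.

Lemma nondecreasing_choice (P : nat -> int -> Prop) :
  (forall k, exists B, P k B) -> (forall k B B', B <= B' -> P k B -> P k B') ->
  exists b : nat -> int, (forall k, b k <= b k.+1) /\ forall k, P k (b k).
Proof.
move=> ex up; have [B0 HB0] := ex 0%N.
have start : P 0%N (- - B0) by rewrite opprK.
have ex_neg k : exists c, P k (- c) by have [B HB] := ex k; exists (- B); rewrite opprK.
have down_neg k c c' : c' <= c -> P k (- c) -> P k (- c') by move=> hc; apply: up; lia.
have [a [_ [a_mono HPa]]] :=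
  @nonincreasing_choice (fun k c => P k (- c)) (- B0) start ex_neg down_neg.
by exists (fun k => - a k); split=> [k|//]; have := a_mono k; lia.
Qed.

Section PhiAction.

Variables (p d : nat) (phi : laurent p -> vec p d -> vec p d).

Hypothesis phi_aut : forall f, isAut (phi f).
Hypothesis phi_add : forall f g, phi (ladd f g) = phi f \o phi g.
Hypothesis phi_cont : phi_continuous phi.
Hypothesis phi_tau : forall f, phi (lmulX f) = tau \o phi f \o tauinv.
Hypothesis phi_power : forall f, lpower f -> forall x, vpower x -> vpower (phi f x).

Lemma phi_shift (n : nat) (g : laurent p) (x : vec p d) :
  phi (lshiftk n%:Z g) x = shiftv n%:Z (phi g (shiftv (- n%:Z) x)).
Proof.
elim: n x => [|n IH] x.
  have -> : lshiftk 0 g = g by apply: laurent_eq => k /=; rewrite subr0.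
  by rewrite oppr0 !shiftv0.
have -> : lshiftk n.+1%:Z g = lmulX (lshiftk n%:Z g).
  by rewrite /lmulX lshiftk_add; congr lshiftk; lia.
rewrite phi_tau /= IH -[tau _]/(shiftv 1 _) -[tauinv x]/(shiftv (-1) x) !shiftv_add.
by congr (shiftv _ (phi g (shiftv _ x))); lia.
Qed.

Lemma phi_shift_coef (n : nat) (f : laurent p) (x : vec p d) r k :
  lcoef (phi f x r) k = lcoef (phi (lshiftk n%:Z f) (shiftv n%:Z x) r) (k + n%:Z).
Proof. by rewrite phi_shift shiftv_add addNr shiftv0 /= addrK. Qed.

Lemma lpower_shift (n : nat) (f : laurent p) : lpower f -> lpower (lshiftk n%:Z f).
Proof. by move=> hf k hk /=; apply: hf; lia. Qed.

(* phi 0 is the identity: it is an injective idempotent. *)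
Lemma phi_zero (x : vec p d) : phi (lconst 0) x = x.
Proof.
have [_ [b [hb _]]] := phi_aut (lconst 0).
have zz : ladd (lconst 0) (lconst 0) = lconst 0 :> laurent p.
  by apply: laurent_eq => n /=; case: (n == 0); rewrite addr0.
have := congr1 (fun F => F x) (phi_add (lconst 0) (lconst 0)); rewrite zz /= => h.
by rewrite -{2}(hb x) {2}h hb.
Qed.

Lemma killed_lower_triangle (f : laurent p) (i j : int) :
  lpower f -> i < 0 -> i < j -> killed (phi f) i j.
Proof.
move=> hf hi hij; apply: killedP => v hv r.
rewrite [RHS]hv; last lia.
have [n [hjn hin]] : exists n : nat, 0 <= j + n%:Z /\ i + n%:Z < 0.
  by have [hj|hj] := ltP j 0; [exists `|j|%N | exists 0%N]; lia.
rewrite (phi_shift_coef n); apply: (phi_power (lpower_shift n hf)) hin.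
exact: inV_vanish_below (inV_shift (s := n%:Z) hv) hjn.
Qed.

(* Continuity of phi at 0: phi f is the identity modulo t^m on all constant
   vectors as soon as f lies in t^N F_p[[t]] for N large enough. *)
Lemma near_identity_on_constants (m : int) :
  exists N : int, forall f, lvanish_below N f ->
    forall c : 'I_d -> 'F_p, vagree m (phi f (vconst c)) (vconst c).
Proof.
pose P (c : {ffun 'I_d -> 'F_p}) N :=
  forall f, lvanish_below N f -> vagree m (phi f (vconst c)) (vconst c).
have [N HN] : exists N, forall c, P c N.
  apply: finite_uniform_bound.
    by move=> c N N' hN H f hf; apply: H => n hn; apply: hf; lia.
  move=> c.
  have hU : vnbhd0 (vanish_below (p:=p) (d:=d) m) by exists m.
  have compact_c : vcompact (fun x => x = vconst c).
    move=> I O _ cov; have [o Ho] := cov (vconst c) erefl.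
    by exists 1%N, (fun _ => o) => x ->; exists ord0.
  have [N HN] := phi_cont (lconst 0) compact_c hU.
  exists N => f hf r k hk.
  have [g [[_ [gi [_ [_ hK]]]] ->]] : exists g,
      braconnier_nbhd (fun x => x = vconst c) (vanish_below m) g /\ phi f = g \o phi (lconst 0).
    by apply: HN => n hn; rewrite hf //=; case: (n == 0).
  have := (hK (vconst c) erefl).1 r k hk.
  by rewrite /= phi_zero => /eqP; rewrite subr_eq0 => /eqP.
exists N => f hf c.
have -> : vconst c = vconst [ffun r => c r] :> vec p d.
  by congr vconst; apply: functional_extensionality => r; rewrite ffunE.
exact: HN.
Qed.

Lemma killed_below (m : nat) :
  exists A : int, forall f, lpower f -> forall i j : int,
     i < A -> i - m%:Z < j -> killed (phi f) i j.
Proof.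
have [N HN] := near_identity_on_constants m%:Z.
exists (Num.min 0 (- N)) => f hf i j hi hij.
have [hij'|hji] := ltP i j; first by apply: killed_lower_triangle => //; lia.
apply: killedP => v hv r.
have [n hn] : exists n : nat, j = - n%:Z by exists `|j|%N; lia.
have hw : inV 0 (shiftv n%:Z v) by have := inV_shift (s := n%:Z) hv; rewrite hn addNr.
have hfn : lvanish_below N (lshiftk n%:Z f).
  by move=> k hk /=; apply: hf; lia.
rewrite (phi_shift_coef n) (inV0_vconst hw) HN //; last lia.
by rewrite -(inV0_vconst hw) /= addrK.
Qed.

Lemma uniform_vanishing (n : nat) :
  exists J : int, forall f, lpower f -> forall x, vanish_below J x ->
    vanish_below n%:Z (phi f x).
Proof.
elim: n => [|n [J IH]]; first by exists 0 => f hf x; apply: phi_power.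
have [M HM] : exists M, forall (c : 'F_p) y,
    vanish_below M y -> vanish_below (J + 1) (phi (lconst c) y).
  apply: finite_uniform_bound => [c M M' hM H y hy|c].
    by apply: H; apply: vanish_below_le hy.
  exact: aut_continuous_at0.
exists M => f hf x hx.
rewrite (lpower_decomp hf) phi_add phi_tau /=.
have hy := vanish_below_shift (s := -1) (HM (lcoef f 0) x hx); rewrite addrK in hy.
have := vanish_below_shift (s := 1) (IH _ (lpower_tail f) _ hy).
by apply: vanish_below_le; lia.
Qed.

Lemma killed_above (k : nat) :
  exists c : int, forall f, lpower f -> forall j : int,
    k%:Z + c < j -> killed (phi f) k%:Z j.
Proof.
have [J HJ] := uniform_vanishing k.+1.
exists (Num.max J 0) => f hf j hj; apply: killedP => v hv r.
have hvJ : vanish_below J v by apply: inV_vanish_below hv _; lia.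
by rewrite (HJ f hf v hvJ r k%:Z) ?hv //; lia.
Qed.

End PhiAction.

Theorem mainTheorem13 (p d : nat) (hp : prime p)
    (phi : laurent p -> vec p d -> vec p d) :
  (forall f, isAut (phi f)) ->
  (forall f g, phi (ladd f g) = phi f \o phi g) ->
  phi_continuous phi ->
  (forall f, phi (lmulX f) = tau \o phi f \o tauinv) ->
  (forall f, lpower f ->
     (forall x, vpower x -> vpower (phi f x)) /\
     (forall y, vpower y -> exists x, vpower x /\ phi f x = y)) ->
  exists a b : nat -> int,
    a 0%N = 0 /\ (forall m : nat, a m.+1 <= a m) /\
    (forall k : nat, b k <= b k.+1) /\
    forall f, lpower f ->
      (forall (m : nat) (i j : int), i < a m -> i - m%:Z < j -> killed (phi f) i j) /\
      (forall (k : nat) (j : int), k%:Z + b k < j -> killed (phi f) k%:Z j).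
Proof.
move=> hAut hadd hcont hX hpow.
have hpres f (hf : lpower f) := (hpow f hf).1.
pose below m A := forall f, lpower f -> forall i j : int,
  i < A -> i - m%:Z < j -> killed (phi f) i j.
pose above k c := forall f, lpower f -> forall j : int,
  k%:Z + c < j -> killed (phi f) k%:Z j.
have below0 : below 0%N 0.
  by move=> f hf i j hi hij; apply: killed_lower_triangle => //; lia.
have below_mono m A A' : A' <= A -> below m A -> below m A'.
  by move=> hA H f hf i j hi; apply: H => //; lia.
have above_mono k c c' : c <= c' -> above k c -> above k c'.
  by move=> hc H f hf j hj; apply: H => //; lia.
have [a [a0 [a_mono a_killed]]] :=
  nonincreasing_choice below0 (killed_below hAut hadd hcont hX hpres) below_mono.
have [b [b_mono b_killed]] :=
  nondecreasing_choice (killed_above hAut hadd hX hpres) above_mono.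
exists a, b; do 3!split=> //.
by move=> f hf; split=> [m|k]; [exact: a_killed | exact: b_killed].
Qed.
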